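(* Let $d$ be a thin dimension vector with $e(d)=1$, let $b=b_1$ be the last position of the unique internal even string of ones, and let $J=J(d)$, $c=\max J$ and $T=\Delta(J)$. Let $\phi^{b-1}:P(b)\to P(b-1)$ be the unique homomorphism sending the last basis vector of $P(b)_t$ to the last basis vector of $P(b-1)_t$, and $\phi^{b}:P(b)\to P(c)$ the unique homomorphism sending the last basis vector $e_r$ of $P(b)_t=k^r$ to $e_r\in P(c)_t$. Then $\psi=(\phi^{b-1},\phi^b):P(b)\to P(b-1)\oplus P(c)$ is injective and its cokernel is isomorphic to $T$; that is, $0\to P(b)\xrightarrow{\psi}P(b-1)\oplus P(c)\to T\to 0$ is a projective resolution of $T$.
   Context: Let $k$ be an algebraically closed field. A thin dimension vector is $d=(d_1,\dots,d_t)\in\{0,1\}^t$ with $d_1=d_t=1$ and no two consecutive entries equal to $0$. Write its entries as maximal strings of consecutive ones of lengths $a_0,a_1,\dots,a_{r+1}$ (in order, separated by single zeros); the strings of lengths $a_1,\dots,a_r$ are called internal, and $e(d)=\#\{1\le i\le r: a_i\text{ even}\}$. Let $b_1<\dots<b_{e(d)}$ be the positions of the last entries of the internal strings of even length. Define $J(d)$ as the set of $j\in\{1,\dots,t\}$ such that either $j\le b_1-1$ and $j\equiv b_1-1\pmod 2$; or $b_i+2\le j\le b_{i+1}-1$ and $j\equiv b_i \pmod 2$ for some $1\le i<e(d)$; or $j\ge b_{e(d)}+2$ and $j\equiv b_{e(d)}\pmod 2$. $\mathcal A_{t,1}$ is the quotient of the path algebra over $k$ of the quiver with vertices $1,\dots,t$,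 arrows $\alpha_i:i\to i+1$ ($1\le i\le t-1$) and $\beta_j:j+2\to j$ ($1\le j\le t-2$), by the relations $\beta_1\alpha_2=0$ and $\beta_{i+1}\alpha_{i+2}=\alpha_i\beta_i$ for $1\le i\le t-3$ (compositions right to left); modules are representations satisfying these relations. A subset $J\subseteq\{1,\dots,t\}$ is standard if $j\in J\Rightarrow j+1\notin J$. For nonempty standard $J$, $\Delta(J)_i=k^{l}$ with $l=\#\{j\in J: j\le i\}$ and basis $e_1,\dots,e_l$; $\alpha_i$ is the inclusion $e_h\mapsto e_h$, and $\beta_j(e_h)=e_{h-1}$ for $h\ge 2$, $\beta_j(e_1)=0$. Put $\Delta(i)=\Delta(\{i\})$ and $P(i)=\Delta(\{i': 1\le i'\le i,\ i'\equiv i\pmod 2\})$; $P(i)$ is the projective cover of $\Delta(i)$. *)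

From mathcomp Require Import all_boot all_order all_algebra.
Set Implicit Arguments. Unset Strict Implicit. Unset Printing Implicit Defensive.
Import GRing.Theory.
Local Open Scope ring_scope.

(* d : seq bool of length t; dv d i = d_i for 1 <= i <= t, false otherwise *)
Definition dv (d : seq bool) (i : nat) : bool := (0 < i)%N && nth false d i.-1.

Definition thin (d : seq bool) : bool :=
  [&& (0 < size d)%N, dv d 1, dv d (size d) &
      all (fun i => dv d i || dv d i.+1) (iota 1 (size d).-1)].

Definition is_string (d : seq bool) (p q : nat) : bool :=
  [&& (1 <= p)%N, (p <= q)%N, (q <= size d)%N,
      all (dv d) (iota p (q.+1 - p)), ~~ dv d p.-1 & ~~ dv d q.+1].

Definition int_even_end (d : seq bool) (q : nat) : bool :=
  has (fun p => [&& is_string d p q, (1 < p)%N, (q < size d)%N & ~~ odd (q.+1 - p)])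
      (iota 1 q).

Definition bseq (d : seq bool) : seq nat := filter (int_even_end d) (iota 1 (size d)).

Definition e (d : seq bool) : nat := size (bseq d).

Definition inJ (d : seq bool) (j : nat) : bool :=
  let bs := bseq d in
  [&& (1 <= j)%N, (j <= size d)%N &
   if bs is b1 :: _ then
     [|| (j <= b1 - 1)%N && (odd j == odd (b1 - 1)),
         has (fun i => [&& (nth 0 bs i + 2 <= j)%N, (j <= nth 0 bs i.+1 - 1)%N
                          & odd j == odd (nth 0 bs i)]) (iota 0 (size bs).-1)
       | (last 0 bs + 2 <= j)%N && (odd j == odd (last 0 bs))]
   else false].

Definition maxJ (d : seq bool) : nat := \max_(j <- iota 1 (size d) | inJ d j) j.

(* Vector spaces are k^n, linear maps are matrices acting on row vectors:
   v |-> v *m M.  alpha i : V_i -> V_{i+1},  beta j : V_{j+2} -> V_j. *)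
Record rep (k : fieldType) := Rep {
  rdim : nat -> nat;
  ralpha : forall i, 'M[k]_(rdim i, rdim i.+1);
  rbeta : forall j, 'M[k]_(rdim j.+2, rdim j) }.

Definition is_hom (k : fieldType) (t : nat) (V W : rep k)
  (f : forall i, 'M[k]_(rdim V i, rdim W i)) : Prop :=
  (forall i, (1 <= i)%N -> (i < t)%N -> ralpha V i *m f i.+1 = f i *m ralpha W i) /\
  (forall j, (1 <= j)%N -> (j.+2 <= t)%N -> rbeta V j *m f j = f j.+2 *m rbeta W j).

Definition dsum (k : fieldType) (V W : rep k) : rep k :=
  @Rep k (fun i => (rdim V i + rdim W i)%N)
    (fun i => block_mx (ralpha V i) 0 0 (ralpha W i))
    (fun j => block_mx (rbeta V j) 0 0 (rbeta W j)).

Definition incl_mx (k : fieldType) m n : 'M[k]_(m, n) :=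
  \matrix_(a < m, b < n) ((a : nat) == b)%:R.
(* e_h |-> e_{h-1} (0-indexed: e_{a} |-> e_{a-1}, e_0 |-> 0) *)
Definition shift_mx (k : fieldType) m n : 'M[k]_(m, n) :=
  \matrix_(a < m, b < n) ((a : nat) == b.+1)%:R.

Definition Delta (k : fieldType) (J : pred nat) : rep k :=
  @Rep k (fun i => count J (iota 1 i))
    (fun i => incl_mx k _ _) (fun j => shift_mx k _ _).

Definition Pset (i : nat) : pred nat :=
  fun j => [&& (1 <= j)%N, (j <= i)%N & odd j == odd i].

Definition Proj (k : fieldType) (i : nat) : rep k := Delta k (Pset i).

(* P(b) is generated by its basis vector at vertex b: the arrows alpha carry it to the last
   basis vector of P(b)_t, and from there the arrows beta reach every other basis vector.
   As the arrows alpha of every Delta(X) are injective, a homomorphism out of P(b) is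
   determined by the image of that last vector, so phi^(b-1) and phi^b are the subdiagonal
   maps e_h |-> e_(h-s) and e_h |-> e_h, with s the parity of b. When e(d) = 1, J consists
   of the positions up to b-1 of the parity of b-1 and those in [b+2, t] of the parity of b,
   and c is the last position of the parity of b. An explicit subdiagonal map
   P(b-1) + P(c) -> T then makes 0 -> P(b)_i -> P(b-1)_i + P(c)_i -> T_i -> 0 exact at every
   vertex i: psi is injective, the map to T is onto, and the dimensions add up. *)

From Pilot Require Import Defs.
From mathcomp Require Import all_boot all_order all_algebra zify.
Set Implicit Arguments. Unset Strict Implicit. Unset Printing Implicit Defensive.
Import GRing.Theory.

Lemma count_iota1S (P : pred nat) i :
  count P (iota 1 i.+1) = count P (iota 1 i) + P i.+1.
Proof. by rewrite -[i.+1]addn1 iotaD count_cat /= add1n addn0 addn1. Qed.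

Lemma count_iota1_leS (P : pred nat) i : count P (iota 1 i) <= count P (iota 1 i.+1).
Proof. by rewrite count_iota1S leq_addr. Qed.

Lemma eq_odd_modn2 m n : (odd m == odd n) = (m %% 2 == n %% 2).
Proof. by rewrite !modn2; case: (odd m); case: (odd n). Qed.

Lemma count_Pset b i : count (Pset b) (iota 1 i) = (minn i b + b %% 2) %/ 2.
Proof.
elim: i => [|i IH]; first by rewrite /= min0n; lia.
by rewrite count_iota1S IH /Pset eq_odd_modn2; lia.
Qed.

Lemma ord_last n : 0 < n -> {x : 'I_n | x.+1 = n}.
Proof. by case: n => // n _; exists ord_max. Qed.

Lemma int_even_end_bounds d b : thin d -> int_even_end d b -> 2 < b /\ b.+2 <= size d.
Proof.
case/and4P=> _ _ d_last _ /hasP[p]; rewrite mem_iota => hp.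
case/and4P=> /and5P[_ _ _ _ /andP[_ d_b1]] p_gt1 b_lt_t odd_len.
have d_t_b1 : size d != b.+1 by apply: contraNneq d_b1 => <-.
have even_len : (b.+1 - p) %% 2 = 0 by rewrite modn2 (negbTE odd_len).
lia.
Qed.

Lemma bseq_e1 d b : e d = 1 -> int_even_end d b -> Defs.bseq d = [:: b].
Proof.
move=> e1 b_end; have : b \in Defs.bseq d.
  rewrite mem_filter b_end mem_iota /=.
  by case/hasP: b_end => p; rewrite mem_iota => hp /and4P[_ _ hbt _]; lia.
by move: e1; rewrite /e; case: (Defs.bseq d) => [|x [|y s]] //= _; rewrite inE => /eqP ->.
Qed.

Lemma inJ_e1 d b j : Defs.bseq d = [:: b] -> inJ d j =
  [&& 0 < j, j <= size d &
      (j <= b - 1) && (j %% 2 == (b - 1) %% 2) || (b + 2 <= j) && (j %% 2 == b %% 2)].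
Proof. by move=> bs; rewrite /inJ bs /= !eq_odd_modn2. Qed.

Lemma maxJ_eq d c : 0 < c <= size d -> inJ d c ->
  (forall j, 0 < j <= size d -> inJ d j -> j <= c) -> maxJ d = c.
Proof.
move=> hc Jc maxc; apply/eqP; rewrite eqn_leq; apply/andP; split.
  by apply/bigmax_leqP_seq => j; rewrite mem_iota => hj Jj; apply: maxc => //; lia.
by apply: (@leq_bigmax_seq _ _ _ (fun j => j)); rewrite // mem_iota; lia.
Qed.

Local Open Scope ring_scope.

Section SubdiagonalMatrices.
Variable k : fieldType.

Definition subdiag_mx (s m n : nat) : 'M[k]_(m, n) :=
  \matrix_(a < m, c < n) ((a : nat) == c + s)%N%:R.

Lemma incl_mxE m n : incl_mx k m n = subdiag_mx 0 m n.
Proof. by apply/matrixP => a c; rewrite !mxE addn0. Qed.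

Lemma shift_mxE m n : shift_mx k m n = subdiag_mx 1 m n.
Proof. by apply/matrixP => a c; rewrite !mxE addn1. Qed.

Lemma sum_nat_delta (F : nat -> k) n j :
  \sum_(x < n) ((x : nat) == j)%:R * F x = (j < n)%:R * F j.
Proof.
case: (ltnP j n) => hj.
  rewrite (bigD1 (Ordinal hj)) //= eqxx mul1r big1 ?addr0 ?mul1r // => x hx.
  by move: hx; rewrite -val_eqE /= => /negbTE ->; rewrite mul0r.
rewrite mul0r big1 // => x _; rewrite (_ : (x : nat) == j = false) ?mul0r //.
by apply/negbTE; have := ltn_ord x; lia.
Qed.

Lemma mul_subdiag_mx s u m n p : subdiag_mx s m n *m subdiag_mx u n p =
  \matrix_(a < m, c < p) (((a : nat) == c + u + s) && (c + u < n))%N%:R.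
Proof.
apply/matrixP => a c; rewrite !mxE.
rewrite (eq_bigr (fun x : 'I_n => ((x : nat) == c + u)%N%:R * ((a : nat) == c + u + s)%N%:R)).
  by rewrite (sum_nat_delta (fun _ => ((a : nat) == c + u + s)%N%:R)) -natrM mulnb andbC.
by move=> x _; rewrite !mxE; case: (_ =P c + u)%N => [->|]; rewrite ?mulr0 ?mul0r ?mulr1 ?mul1r.
Qed.

Lemma eq_mul_subdiag_mx s u s' u' m n n' p : (u + s = u' + s')%N ->
    (forall a c, (a < m)%N -> (c < p)%N -> a = (c + u + s)%N ->
       (c + u < n)%N = (c + u' < n')%N) ->
  subdiag_mx s m n *m subdiag_mx u n p = subdiag_mx s' m n' *m subdiag_mx u' n' p.
Proof.
move=> esu hn; rewrite !mul_subdiag_mx; apply/matrixP => a c; rewrite !mxE -!addnA esu.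
by case: eqP => //= ea; rewrite (hn a c) //; lia.
Qed.

Lemma row_subdiag_mx s m n (x : 'I_m) (y : 'I_n) :
  x = (y + s)%N :> nat -> row x (subdiag_mx s m n) = delta_mx 0 y.
Proof. by move=> exy; apply/rowP => j; rewrite !mxE exy eqn_add2r eqxx eq_sym. Qed.

Lemma row_free_subdiag0 m n : (m <= n)%N -> row_free (subdiag_mx 0 m n).
Proof.
move=> hmn; apply/row_freeP; exists (subdiag_mx 0 n m).
rewrite mul_subdiag_mx; apply/matrixP => a c; rewrite !mxE !addn0.
by rewrite (leq_trans (ltn_ord c) hmn) andbT.
Qed.

Lemma row_free_subdiag_row s m n1 nc : (m <= nc)%N ->
  row_free (row_mx (subdiag_mx s m n1) (subdiag_mx 0 m nc)).
Proof.
move=> hmc; apply/row_freeP; exists (col_mx 0 (subdiag_mx 0 nc m)).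
rewrite mul_row_col mulmx0 add0r mul_subdiag_mx; apply/matrixP => a c; rewrite !mxE !addn0.
by rewrite (leq_trans (ltn_ord c) hmc) andbT.
Qed.

Lemma row_full_subdiag_col s n1 nc nT : ((nT <= n1) || (nT + s <= nc))%N ->
  row_full (col_mx (- subdiag_mx 0 n1 nT) (subdiag_mx s nc nT)).
Proof.
move=> hT; pose R : 'M[k]_(nT, nc) := \matrix_(a, x) ((n1 <= a) && ((x : nat) == a + s))%N%:R.
apply/row_fullP; exists (row_mx (- subdiag_mx 0 nT n1) R).
rewrite mul_row_col mulNmx mulmxN opprK mul_subdiag_mx; apply/matrixP => a c; rewrite !mxE.
rewrite (eq_bigr (fun x : 'I_nc => ((x : nat) == a + s)%N%:R * ((n1 <= a) && (a == c))%N%:R)).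
  rewrite (sum_nat_delta (fun _ => ((n1 <= a) && (a == c))%N%:R)) !addn0 -natrM.
  case: (eqVneq a c) => [<-|nac]; last first.
    by have := nac; rewrite -val_eqE => /negbTE ->; rewrite andbF muln0 addr0.
  rewrite !eqxx andbT; have := ltn_ord a; case: (ltnP a n1) => ha /= haT.
    by rewrite muln0 addr0.
  have -> : (a + s < nc)%N by lia.
  by rewrite add0r.
move=> x _; rewrite !mxE; case: (_ =P a + s)%N => [->|]; rewrite ?andbF ?mul0r ?mulr0 //.
by rewrite andbT mul1r eqn_add2r -natrM mulnb.
Qed.

Lemma subdiag_exact s m n1 nc nT :
    (m <= nc)%N -> (m <= n1 + s)%N -> (nT + m = n1 + nc)%N ->
    ((nT <= n1) || (nT + s <= nc))%N ->
  let M := row_mx (subdiag_mx s m n1) (subdiag_mx 0 m nc) in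
  let P := col_mx (- subdiag_mx 0 n1 nT) (subdiag_mx s nc nT) in
  [/\ row_free M, row_full P & (M == kermx P)%MS].
Proof.
move=> hmc hm1 hdim hT M P.
have freeM : row_free M by apply: row_free_subdiag_row.
have fullP : row_full P by apply: row_full_subdiag_col.
have subM : (M <= kermx P)%MS.
  apply/sub_kermxP; rewrite mul_row_col mulmxN !mul_subdiag_mx.
  apply/matrixP => a c; rewrite !mxE !addn0.
  case: eqP => ea /=; last by rewrite oppr0 addr0.
  have := ltn_ord a; rewrite ea => hca.
  have -> : (c < n1)%N by lia.
  have -> : (c + s < nc)%N by lia.
  by rewrite addNr.
split=> //; rewrite -(mxrank_leqif_eq subM).2 mxrank_ker (eqP freeM) (eqP fullP).
by apply/eqP; lia.
Qed.

Definition row_at m n (a : nat) (M : 'M[k]_(m, n)) : 'rV[k]_n :=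
  if insub a is Some x then row x M else 0.

Lemma row_atE m n (x : 'I_m) (M : 'M[k]_(m, n)) : row_at x M = row x M.
Proof. by rewrite /row_at valK. Qed.

Lemma row_at_last m n (x : 'I_m) (M : 'M[k]_(m, n)) : x.+1 = m -> row_at m.-1 M = row x M.
Proof. by move=> x_last; rewrite (_ : m.-1 = x) ?row_atE //; lia. Qed.

Lemma row_at_oob m n a (M : 'M[k]_(m, n)) : (m <= a)%N -> row_at a M = 0.
Proof. by move=> ha; rewrite /row_at insubN // -leqNgt. Qed.

Lemma row_atM m n p a (M : 'M[k]_(m, n)) (N : 'M[k]_(n, p)) :
  row_at a (M *m N) = row_at a M *m N.
Proof. by rewrite /row_at; case: insub => [x|]; rewrite ?row_mul ?mul0mx. Qed.

Lemma row_atB m n a (M N : 'M[k]_(m, n)) : row_at a (M - N) = row_at a M - row_at a N.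
Proof. by rewrite /row_at; case: insub => [x|]; rewrite ?linearB ?subr0. Qed.

Lemma row_at_eq0 m n (M : 'M[k]_(m, n)) : (forall a, row_at a M = 0) -> M = 0.
Proof. by move=> h; apply/row_matrixP => x; rewrite -row_atE h linear0. Qed.

Lemma row_at_subdiag_mul s m n p a (M : 'M[k]_(n, p)) :
  row_at a (subdiag_mx s m n *m M) =
  if [&& s <= a, a < m & a - s < n]%N then row_at (a - s) M else 0.
Proof.
case: (ltnP a m) => [ham|hma]; last by rewrite row_at_oob // andbF.
rewrite -[a]/(val (Ordinal ham)) row_atE /=.
apply/rowP => j; rewrite !mxE.
rewrite (eq_bigr (fun x : 'I_n => ((x : nat) == a - s)%N%:R * ((s <= a)%N%:R * row_at x M 0 j))).
  rewrite (sum_nat_delta (fun x => (s <= a)%N%:R * row_at x M 0 j)) mulrA -natrM mulnb.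
  by rewrite andbC; case: ifP; rewrite ?mul1r ?mul0r ?mxE.
move=> x _; rewrite row_atE !mxE.
by case: (leqP s a) => hs; case: eqP => /= e1; case: eqP => e2;
  rewrite ?mul0r ?mul1r ?mulr0 //; lia.
Qed.

End SubdiagonalMatrices.

Arguments subdiag_mx {k} s m n.

Section Homomorphisms.
Variable k : fieldType.

Lemma is_homB t (V W : rep k) (F G : forall i, 'M[k]_(rdim V i, rdim W i)) :
  is_hom t F -> is_hom t G -> is_hom t (fun i => F i - G i).
Proof.
move=> [aF bF] [aG bG]; split=> i h1 h2; rewrite mulmxBr mulmxBl.
  by rewrite aF // aG.
by rewrite bF // bG.
Qed.

Lemma rdim_Delta (X : pred nat) i : rdim (Delta k X) i = count X (iota 1 i).
Proof. by []. Qed.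

Lemma rdim_Proj b i : rdim (Proj k b) i = ((minn i b + b %% 2) %/ 2)%N.
Proof. exact: count_Pset. Qed.

Lemma ralpha_Delta (X : pred nat) i :
  ralpha (Delta k X) i = subdiag_mx 0 (count X (iota 1 i)) (count X (iota 1 i.+1)).
Proof. exact: incl_mxE. Qed.

Lemma rbeta_Delta (X : pred nat) j :
  rbeta (Delta k X) j = subdiag_mx 1 (count X (iota 1 j.+2)) (count X (iota 1 j)).
Proof. exact: shift_mxE. Qed.

Lemma ralpha_dsum (V W : rep k) i :
  ralpha (dsum V W) i = block_mx (ralpha V i) 0 0 (ralpha W i).
Proof. by []. Qed.

Lemma rbeta_dsum (V W : rep k) j :
  rbeta (dsum V W) j = block_mx (rbeta V j) 0 0 (rbeta W j).
Proof. by []. Qed.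

Lemma row_free_Delta_alpha (X : pred nat) i : row_free (ralpha (Delta k X) i).
Proof. by rewrite ralpha_Delta; exact/row_free_subdiag0/count_iota1_leS. Qed.

Section ProjHom.
Variables (b t : nat) (W : rep k) (D : forall i, 'M[k]_(rdim (Proj k b) i, rdim W i)).
Hypotheses (b_gt0 : (0 < b)%N) (b_le_t : (b <= t)%N) (homD : is_hom t D).

Lemma Proj_hom_row_up a i j : (a < rdim (Proj k b) i)%N -> (i <= j <= t)%N ->
  row_at a (D i) = 0 -> row_at a (D j) = 0.
Proof.
move=> hai; have i_gt0 : (0 < i)%N by move: hai; rewrite rdim_Proj; lia.
move=> /andP[]; elim: j => [|j IH] hij hjt Di0.
  by rewrite leqn0 in hij; move/eqP: hij => hi0; subst i.
case: (eqVneq i j.+1) => [<- //|nij]; have hj : (i <= j)%N by lia.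
have := congr1 (row_at a) (homD.1 j ltac:(lia) hjt).
rewrite ralpha_Delta row_at_subdiag_mul row_atM (IH hj (ltnW hjt) Di0) mul0mx subn0 ifT //.
by rewrite !rdim_Proj in hai *; lia.
Qed.

Hypothesis alphaW_free : forall i, (0 < i < t)%N -> row_free (ralpha W i).
Hypothesis last_row0 : row_at (rdim (Proj k b) t).-1 (D t) = 0.

Lemma Proj_hom_last_row_down i : (b <= i <= t)%N ->
  row_at (rdim (Proj k b) t).-1 (D i) = 0.
Proof.
move=> /andP[hbi hit]; have [m emt] : {m | i + m = t}%N by exists (t - i)%N; lia.
elim: m i emt hbi hit => [|m IH] i emt hbi hit; first by rewrite addn0 in emt; subst i.
have := congr1 (row_at (rdim (Proj k b) t).-1) (homD.1 i ltac:(lia) ltac:(lia)).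
rewrite ralpha_Delta row_at_subdiag_mul row_atM ifT; last by rewrite !rdim_Proj; lia.
rewrite subn0 IH ?addSnnS //; try lia.
by move/esym; rewrite -(mul0mx _ (ralpha W i)) => /(row_free_inj (alphaW_free _)) -> //; lia.
Qed.

(* The (a+1)-th basis vector of P(b) lives at the vertices from 2a+2-(b mod 2) on. *)
Lemma Proj_hom_row_first a j : (a < rdim (Proj k b) t)%N ->
  j = (2 * a + 2 - b %% 2)%N -> row_at a (D j) = 0.
Proof.
move=> hat; have [m ema] : {m | a + m = (rdim (Proj k b) t).-1}%N.
  by exists ((rdim (Proj k b) t).-1 - a)%N; lia.
elim: m a j ema hat => [|m IH] a j ema hat ej.
  rewrite addn0 in ema; rewrite ema; apply: Proj_hom_last_row_down.
  by rewrite rdim_Proj in ema hat *; lia.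
have := congr1 (row_at a.+1) (homD.2 j ltac:(lia) ltac:(rewrite rdim_Proj in ema hat; lia)).
rewrite rbeta_Delta row_at_subdiag_mul row_atM ifT; last by rewrite !rdim_Proj in ema hat *; lia.
by rewrite subn1 (IH a.+1 j.+2) ?mul0mx //; lia.
Qed.

Lemma Proj_hom_eq0 i : (0 < i <= t)%N -> D i = 0.
Proof.
move=> hit; apply: row_at_eq0 => a.
case: (ltnP a (rdim (Proj k b) i)) => hai; last exact: row_at_oob.
apply: (@Proj_hom_row_up a (2 * a + 2 - b %% 2)%N); rewrite ?rdim_Proj in hai *; try lia.
by apply: Proj_hom_row_first => //; rewrite !rdim_Proj in hai *; lia.
Qed.

End ProjHom.

Lemma Proj_hom_eq b t (W : rep k) (F G : forall i, 'M[k]_(rdim (Proj k b) i, rdim W i)) :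
    (0 < b <= t)%N -> (forall i, (0 < i < t)%N -> row_free (ralpha W i)) ->
    is_hom t F -> is_hom t G ->
    (forall x : 'I_(rdim (Proj k b) t), x.+1 = rdim (Proj k b) t -> row x (F t) = row x (G t)) ->
  forall i, (0 < i <= t)%N -> F i = G i.
Proof.
move=> /andP[b_gt0 b_le_t] alphaW_free homF homG eqFG i hit.
have [x x_last] := @ord_last (rdim (Proj k b) t) ltac:(rewrite rdim_Proj; lia).
apply/eqP; rewrite -subr_eq0; apply/eqP.
apply: (Proj_hom_eq0 b_gt0 b_le_t (is_homB homF homG) alphaW_free) => //.
by rewrite row_atB !(row_at_last _ x_last) eqFG // subrr.
Qed.

Definition Proj_pred_mx b i : 'M[k]_(rdim (Proj k b) i, rdim (Proj k b.-1) i) :=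
  subdiag_mx (b %% 2) _ _.

Definition Proj_incl_mx b c i : 'M[k]_(rdim (Proj k b) i, rdim (Proj k c) i) :=
  subdiag_mx 0 _ _.

Lemma Proj_pred_hom b t : (0 < b)%N -> is_hom t (Proj_pred_mx b).
Proof.
move=> b_gt0; split=> i i_gt0 hit; rewrite ?ralpha_Delta ?rbeta_Delta;
  apply: eq_mul_subdiag_mx => [|a c]; rewrite ?rdim_Proj; lia.
Qed.

Lemma Proj_incl_hom b c t : (b <= c)%N -> (b %% 2 = c %% 2)%N ->
  is_hom t (Proj_incl_mx b c).
Proof.
move=> hbc hbc2; split=> i i_gt0 hit; rewrite ?ralpha_Delta ?rbeta_Delta;
  apply: eq_mul_subdiag_mx => [|a c']; rewrite ?rdim_Proj; lia.
Qed.

Lemma row_Proj_pred_mx b t (x : 'I_(rdim (Proj k b) t)) (y : 'I_(rdim (Proj k b.-1) t)) :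
    (0 < b <= t)%N -> x.+1 = rdim (Proj k b) t -> y.+1 = rdim (Proj k b.-1) t ->
  row x (Proj_pred_mx b t) = delta_mx 0 y.
Proof.
move=> hbt hx hy; apply: row_subdiag_mx.
by have := rdim_Proj b t; have := rdim_Proj b.-1 t; lia.
Qed.

Lemma row_Proj_incl_mx b c i (x : 'I_(rdim (Proj k b) i)) (y : 'I_(rdim (Proj k c) i)) :
  y = x :> nat -> row x (Proj_incl_mx b c i) = delta_mx 0 y.
Proof. by move=> eyx; apply: row_subdiag_mx; rewrite addn0. Qed.

End Homomorphisms.

Definition coker_mx (k : fieldType) (X : pred nat) b c i :
    'M[k]_(rdim (dsum (Proj k b.-1) (Proj k c)) i, rdim (Delta k X) i) :=
  col_mx (- subdiag_mx 0 _ _) (subdiag_mx (b %% 2) _ _).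

Section EvenEnd.
Variables (k : fieldType) (d : seq bool) (b : nat).
Hypotheses (d_thin : thin d) (d_e1 : e d = 1%N) (b_end : int_even_end d b).

Let b_bounds := int_even_end_bounds d_thin b_end.
Let bseq_b := bseq_e1 d_e1 b_end.

Lemma maxJ_e1 : maxJ d = (size d - (size d - b) %% 2)%N.
Proof.
case: b_bounds => b_gt2 b_lt_t.
by apply: maxJ_eq => [||j hj]; rewrite ?(inJ_e1 _ bseq_b); lia.
Qed.

Lemma count_inJ i : (i <= size d)%N ->
  count (inJ d) (iota 1 i) = ((minn i (b - 1) + (b - 1) %% 2) %/ 2 + (i - b) %/ 2)%N.
Proof.
case: b_bounds => b_gt2 b_lt_t; elim: i => [|i IH] hi; first by rewrite /=; lia.
by rewrite count_iota1S IH ?(inJ_e1 _ bseq_b); lia.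
Qed.

Lemma coker_hom : is_hom (size d) (coker_mx k (inJ d) b (maxJ d)).
Proof.
case: b_bounds => b_gt2 b_lt_t; have c_def := maxJ_e1.
split=> i i_gt0 hit;
  rewrite ?ralpha_dsum ?rbeta_dsum ?ralpha_Delta ?rbeta_Delta mul_block_col !mul0mx addr0 add0r
    mul_col_mx !mulmxN !mulNmx; congr col_mx; try congr GRing.opp;
  apply: eq_mul_subdiag_mx => [|a c]; rewrite ?rdim_Proj ?rdim_Delta ?count_inJ; lia.
Qed.

Lemma resolution_exact_at i : (0 < i <= size d)%N ->
  let M := row_mx (Proj_pred_mx k b i) (Proj_incl_mx k b (maxJ d) i) in
  [/\ row_free M, row_full (coker_mx k (inJ d) b (maxJ d) i) &
      (M == kermx (coker_mx k (inJ d) b (maxJ d) i))%MS].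
Proof.
case: b_bounds => b_gt2 b_lt_t; have c_def := maxJ_e1.
move=> hi; apply: subdiag_exact; rewrite ?rdim_Proj ?rdim_Delta ?count_inJ; lia.
Qed.

End EvenEnd.

Unset Implicit Arguments.

Theorem lemma4p3 (k : closedFieldType) (d : seq bool) (b : nat) :
  thin d -> e d = 1%N -> int_even_end d b ->
  let t := size d in
  let c := maxJ d in
  let T := Delta k (inJ d) in
  let PB := Proj k b in
  let PB1 := Proj k b.-1 in
  let PC := Proj k c in
  (* phi^{b-1}: last basis vector of P(b)_t |-> last basis vector of P(b-1)_t *)
  let cond1 := fun f : forall i, 'M[k]_(rdim PB i, rdim PB1 i) =>
    is_hom t f /\
    forall (x : 'I_(rdim PB t)) (y : 'I_(rdim PB1 t)),
      (x : nat).+1 = rdim PB t -> (y : nat).+1 = rdim PB1 t ->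
      row x (f t) = delta_mx 0 y in
  (* phi^b: e_r in P(b)_t = k^r |-> e_r in P(c)_t *)
  let cond2 := fun g : forall i, 'M[k]_(rdim PB i, rdim PC i) =>
    is_hom t g /\
    forall (x : 'I_(rdim PB t)) (y : 'I_(rdim PC t)),
      (x : nat).+1 = rdim PB t -> (y : nat) = x ->
      row x (g t) = delta_mx 0 y in
  (exists f g, cond1 f /\ cond2 g) /\
  forall f g, cond1 f -> cond2 g ->
    (* psi = (phi^{b-1}, phi^b) is injective *)
    (forall i, (1 <= i <= t)%N -> row_free (row_mx (f i) (g i))) /\
    (* and its cokernel is T: there is an epimorphism onto T with kernel im psi *)
    exists pi : forall i, 'M[k]_(rdim (dsum PB1 PC) i, rdim T i),
      is_hom t pi /\
      forall i, (1 <= i <= t)%N ->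
        row_full (pi i) /\ (row_mx (f i) (g i) == kermx (pi i))%MS.
Proof.
move=> d_thin d_e1 b_end t c T PB PB1 PC cond1 cond2.
have [b_gt2 b_lt_t] := int_even_end_bounds d_thin b_end.
have c_def : c = (t - (t - b) %% 2)%N := maxJ_e1 d_thin d_e1 b_end.
have condE : cond1 (Proj_pred_mx k b).
  split=> [|x y hx hy]; first by apply: Proj_pred_hom; lia.
  by apply: row_Proj_pred_mx => //; lia.
have condG : cond2 (Proj_incl_mx k b c).
  by split=> [|x y _ hy]; [apply: Proj_incl_hom; lia | exact: row_Proj_incl_mx].
split; first by exists (Proj_pred_mx k b), (Proj_incl_mx k b c).
have [y0 y0_last] := @ord_last (rdim PB1 t) ltac:(rewrite rdim_Proj; lia).
have leBC : (rdim PB t <= rdim PC t)%N by rewrite !rdim_Proj; lia.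
move=> f g [homf f_last] [homg g_last].
have fE : forall i, (0 < i <= t)%N -> f i = Proj_pred_mx k b i.
  apply: Proj_hom_eq homf condE.1 _ => [|i _|x hx]; first lia; first exact: row_free_Delta_alpha.
  by rewrite (f_last x y0) // (condE.2 x y0).
have gG : forall i, (0 < i <= t)%N -> g i = Proj_incl_mx k b c i.
  apply: Proj_hom_eq homg condG.1 _ => [|i _|x hx]; first lia; first exact: row_free_Delta_alpha.
  by rewrite (g_last x (widen_ord leBC x)) // (condG.2 x (widen_ord leBC x)).
have exact_at := resolution_exact_at k d_thin d_e1 b_end.
split=> [i hi|]; first by rewrite fE // gG //; case: (exact_at i hi).
exists (coker_mx k (inJ d) b c); split; first exact: coker_hom.
by move=> i hi; rewrite fE // gG //; case: (exact_at i hi).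
Qed.
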